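(* Let $b\in\mathbb R$, $\omega>0$, $\mathcal B>0$, $y\in\mathbb R^2\setminus\{0\}$, $\eta\in\mathbb R^2$ with $y\wedge\eta\ne b$, and let $Z(t,y,\eta)=\xi^t_\eta-i\mathcal B\,x^t_\eta$. Then $Z$ is a non-degenerate matrix-function for all $t\ge0$. Moreover $$\det Z=\Big(\cos(\omega t)-i\mathcal B\omega^{-1}\sin(\omega t)\Big)^2-b^2\omega^{-2}|x^t|^{-4}\sin^2(\omega t),$$ and the eigenvalues of $Z$ are $$\mu_{1,2}=\cos(\omega t)-i\mathcal B\omega^{-1}\sin(\omega t)\pm b\,\omega^{-1}|x^t|^{-2}\sin(\omega t).$$
   Context: $A(x)=\big(-b\,x_2/|x|^2,\ b\,x_1/|x|^2\big)$ for $x\ne0$; $u\wedge v=u_1v_2-u_2v_1$. $(x^t,\xi^t)=(x^t(y,\eta),\xi^t(y,\eta))$ is the solution of Hamilton's equations for $h(x,\xi)=\frac12|\xi-A(x)|^2+\frac{\omega^2}{2}|x|^2$: $\dot x^t=\xi^t-A(x^t)$, $\dot\xi^t=-h_x(x^t,\xi^t)$, $x^0=y$, $\xi^0=\eta$; explicitly (the trajectory never meets the origin since $y\wedge\eta\ne b$) $x^t=\cos(\omega t)y+\frac{\sin(\omega t)}{\omega}(\eta-A(y))$, $\xi^t=\dot x^t+A(x^t)$. Here $x^t_\eta,\xi^t_\eta$ denote the $2\times2$ Jacobian matrices with respect to $\eta$. *)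

From HB Require Import structures.
From mathcomp Require Import all_boot all_order all_algebra.
From mathcomp Require Import all_classical all_reals all_analysis.
From mathcomp Require Import complex.
Set Implicit Arguments. Unset Strict Implicit. Unset Printing Implicit Defensive.
Import Order.TTheory GRing.Theory Num.Theory.
Import numFieldNormedType.Exports.
Local Open Scope ring_scope.

Section Defs.
Variable R : realType.

Definition vec2 (a c : R) : 'rV[R]_2 :=
  \row_(j < 2) (if val j == 0%N then a else c).

Definition sqnorm2 (x : 'rV[R]_2) : R := x 0 0 ^+ 2 + x 0 1 ^+ 2.

Definition wedge (u v : 'rV[R]_2) : R := u 0 0 * v 0 1 - u 0 1 * v 0 0.

Definition Apot (b : R) (x : 'rV[R]_2) : 'rV[R]_2 :=
  vec2 (- b * x 0 1 / sqnorm2 x) (b * x 0 0 / sqnorm2 x).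

Definition xt (b w : R) (y eta : 'rV[R]_2) (t : R) : 'rV[R]_2 :=
  cos (w * t) *: y + (sin (w * t) / w) *: (eta - Apot b y).

Definition xit (b w : R) (y eta : 'rV[R]_2) (t : R) : 'rV[R]_2 :=
  'D_1 (xt b w y eta) t + Apot b (xt b w y eta t).

(* Jacobian matrix (d f_i / d eta_j) of f : R^2 -> R^2 at eta *)
Definition jac (f : 'rV[R]_2 -> 'rV[R]_2) (eta : 'rV[R]_2) : 'M[R]_2 :=
  \matrix_(i < 2, j < 2) ('D_(delta_mx 0 j) f eta) 0 i.

Definition cplxmx (M : 'M[R]_2) : 'M[R[i]]_2 := map_mx (fun r => (r%:C)%C) M.

Definition Zmat (b w B : R) (y eta : 'rV[R]_2) (t : R) : 'M[R[i]]_2 :=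
  cplxmx (jac (fun e => xit b w y e t) eta)
  - ('i%C * (B%:C)%C) *: cplxmx (jac (fun e => xt b w y e t) eta).

End Defs.

From HB Require Import structures.
From mathcomp Require Import all_boot all_order all_algebra.
From mathcomp Require Import all_classical all_reals all_analysis.
From mathcomp Require Import complex.
From mathcomp Require Import ring.
Import Order.TTheory GRing.Theory Num.Theory.
Import numFieldNormedType.Exports.
Local Open Scope ring_scope.

(* The trajectory x^t is affine in eta with slope (sin(wt)/w) I, and
   xi^t = dx^t/dt + A(x^t), so
     Z = (cos(wt) - i B w^-1 sin(wt)) I + w^-1 sin(wt) DA(x^t).
   Away from the origin A is curl- and divergence-free, so DA(x) is symmetric
   and traceless, with eigenvalues +-b/|x|^2; this gives det Z and the
   eigenvalues of Z.  A factor mu_{1,2} can only vanish when sin(wt) = 0, but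
   then cos(wt) = +-1 while the +-b term vanishes.  Finally x^t never meets the
   origin because y /\ x^t = w^-1 sin(wt) (y /\ eta - b), and x^t = cos(wt) y
   when sin(wt) = 0. *)

Section DirectionalDerivative.
Context {R : realType} {U V W : normedModType R}.

Lemma is_derive_along (f : U -> W) (g : V -> W) (a v : U) (x u : V) (d : W) :
  (forall h : R, f (h *: v + a) - f a = g (h *: u + x) - g x) ->
  is_derive a v f d -> is_derive x u g d.
Proof.
move=> fg [fav <-].
have quotE : (fun h : R => h^-1 *: ((f \o shift a) (h *: v) - f a)) =
             (fun h : R => h^-1 *: ((g \o shift x) (h *: u) - g x)).
  by apply/funext => h /=; rewrite /shift fg.
by apply: DeriveDef; rewrite /derivable /derive -quotE.
Qed.

Lemma is_derive_affine (p : W) (c : R) (x v : W) :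
  is_derive x v (fun e => c *: e + p) (c *: v).
Proof.
have := is_deriveD (is_deriveZ c (is_derive_id x v)) (is_derive_cst p x v).
by move=> H; refine (is_derive_eq H _); rewrite addr0.
Qed.

Lemma is_derive1Zl {k : R -> R} {x dk : R} (w : W) :
  is_derive x 1 k dk -> is_derive x 1 (fun z => k z *: w) (dk *: w).
Proof.
move=> [/derivable1_diffP kx <-]; apply: DeriveDef.
  exact/derivable1_diffP/differentiableZl.
by rewrite !deriveE ?diffZl //; exact: differentiableZl.
Qed.

Lemma is_derive_mx {m n : nat} (M : V -> 'M[R]_(m, n)) (x u : V) (D : 'M[R]_(m, n)) :
  (forall i j, is_derive x u (fun z => M z i j) (D i j)) -> is_derive x u M D.
Proof.
move=> MD; have dM : derivable M x u by apply/derivable_mxP => i j; case: (MD i j).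
apply: DeriveDef => //; rewrite derive_mx //; apply/matrixP => i j.
by rewrite mxE; case: (MD i j).
Qed.
End DirectionalDerivative.

Lemma is_derive_comp_scale {R : realType} {f : R -> R} {w x df : R} :
  is_derive (w * x) 1 f df -> is_derive x 1 (fun h => f (w * h)) (w * df).
Proof.
move=> fdf; have := is_derive1_comp fdf (is_deriveZ w (is_derive_id x (1 : R))).
by move=> H; refine (is_derive_eq H _); rewrite [w%:A]mulr1 mulrC.
Qed.

Section LineDerivative.
Context {R : realType}.
Variables (x u : 'rV[R]_2).

Lemma is_derive_coord_line (k : 'I_2) :
  is_derive (0 : R) 1 (fun h : R => (h *: u + x) 0 k) (u 0 k).
Proof.
rewrite (_ : (fun h : R => _) = fun h => u 0 k *: h + x 0 k); last first.
  by apply/funext => h; rewrite !mxE mulrC.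
by apply: is_derive_eq (is_derive_affine _ _ _ _) _; rewrite [u 0 k *: 1]mulr1.
Qed.

Lemma is_derive_sqnorm2_line :
  is_derive (0 : R) 1 (fun h : R => sqnorm2 (h *: u + x))
    (2 * (x 0 0 * u 0 0 + x 0 1 * u 0 1)).
Proof.
have := is_deriveD (is_deriveX 2 (is_derive_coord_line 0))
                   (is_deriveX 2 (is_derive_coord_line 1)).
move=> H; refine (is_derive_eq H _).
by rewrite !scale0r !add0r /GRing.scale /=; ring.
Qed.

Lemma is_derive_coord_div_sqnorm2_line (m : R) (k : 'I_2) : sqnorm2 x != 0 ->
  is_derive (0 : R) 1 (fun h : R => m * (h *: u + x) 0 k / sqnorm2 (h *: u + x))
    (m * (u 0 k * sqnorm2 x - x 0 k * (2 * (x 0 0 * u 0 0 + x 0 1 * u 0 1)))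
       / sqnorm2 x ^+ 2).
Proof.
move=> x0; have x0' : sqnorm2 (0 *: u + x) != 0 by rewrite scale0r add0r.
have := is_deriveM (is_deriveZ m (is_derive_coord_line k))
  (@is_deriveV _ (fun h => sqnorm2 (h *: u + x)) 0 _ 1 x0' is_derive_sqnorm2_line).
move=> H; refine (is_derive_eq H _) => /=.
rewrite scale0r add0r /GRing.scale /=.
by move: x0; rewrite /sqnorm2 => x0; field.
Qed.
End LineDerivative.

Definition symtr {V : zmodType} (p q : V) : 'M[V]_2 :=
  \matrix_(i, j) if i == j then (if i == 0 then p else - p) else q.

Section SymmetricTraceless.
Variable F : comNzRingType.

Lemma trmx_symtr (p q : F) : (symtr p q)^T = symtr p q.
Proof. by apply/matrixP => i j; rewrite !mxE eq_sym; case: eqP => // ->. Qed.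

Lemma mulmx_rV2E n (u : 'rV[F]_2) (M : 'M[F]_(2, n)) j :
  (u *m M) 0 j = u 0 0 * M 0 j + u 0 1 * M 1 j.
Proof.
rewrite mxE !big_ord_recl big_ord0 addr0.
by congr (u 0 _ * M _ j + u 0 _ * M _ j); apply/val_inj.
Qed.

Lemma det_mx22 (M : 'M[F]_2) : \det M = M 0 0 * M 1 1 - M 0 1 * M 1 0.
Proof.
rewrite (expand_det_row _ 0) !big_ord_recl big_ord0 /cofactor !det_mx11 !mxE /=.
rewrite expr0 mul1r addr0 expr1 mulN1r mulrN.
have -> : lift 0 0 = 1 :> 'I_2 by apply/val_inj.
by have -> : lift 1 0 = 0 :> 'I_2 by apply/val_inj.
Qed.

Lemma det_scalar_add_symtr (a p q : F) :
  \det (a%:M + symtr p q) = a ^+ 2 - (p ^+ 2 + q ^+ 2).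
Proof. by rewrite det_mx22 !mxE /=; ring. Qed.
End SymmetricTraceless.

Lemma eigenvalue_det (F : fieldType) n (A : 'M[F]_n) (a : F) :
  eigenvalue A a = (\det (a%:M - A) == 0).
Proof.
rewrite eigenvalue_root_char /root /char_poly -horner_evalE -det_map_mx.
congr (\det _ == 0); apply/matrixP => i j.
by rewrite !mxE /= horner_evalE hornerD hornerN hornerMn hornerX hornerC.
Qed.

Lemma eigenvalue_scalar_add_symtr {F : fieldType} {a p q r : F} (mu : F) :
  p ^+ 2 + q ^+ 2 = r ^+ 2 ->
  eigenvalue (a%:M + symtr p q) mu = (mu == a + r) || (mu == a - r).
Proof.
move=> pqr; rewrite eigenvalue_det.
have -> : mu%:M - (a%:M + symtr p q) = (mu - a)%:M + symtr (- p) (- q).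
  by apply/matrixP => i j; rewrite !mxE; case: (i == j); case: (i == 0); ring.
rewrite det_scalar_add_symtr !sqrrN pqr.
have -> : (mu - a) ^+ 2 - r ^+ 2 = (mu - (a + r)) * (mu - (a - r)) by ring.
by rewrite mulf_eq0 !subr_eq0.
Qed.

Section MagneticPotential.
Context {R : realType}.

Lemma sqnorm2_eq0 (x : 'rV[R]_2) : (sqnorm2 x == 0) = (x == 0).
Proof.
rewrite /sqnorm2 paddr_eq0 ?sqr_ge0 // !sqrf_eq0.
apply/andP/eqP => [[/eqP x0 /eqP x1] | ->]; last by rewrite !mxE eqxx.
apply/matrixP => i j; rewrite (ord1 i) !mxE.
by case: j => [[|[|//]] ?]; [rewrite -x0 | rewrite -x1]; congr (x 0 _); apply/val_inj.
Qed.

(* Away from the origin A is curl- and divergence-free, hence its Jacobian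
   is symmetric and traceless. *)
Definition dApot (b : R) (x : 'rV[R]_2) : 'M[R]_2 :=
  symtr (2 * b * x 0 0 * x 0 1 / sqnorm2 x ^+ 2)
        (b * (x 0 1 ^+ 2 - x 0 0 ^+ 2) / sqnorm2 x ^+ 2).

Lemma is_derive_Apot (b : R) (x u : 'rV[R]_2) :
  sqnorm2 x != 0 -> is_derive x u (Apot b) (u *m dApot b x).
Proof.
move=> x0; apply: (is_derive_along (fun h : R => Apot b (h *: u + x)) _ 0 1).
  by move=> h; rewrite addr0 [h%:A]mulr1 scale0r add0r.
apply: is_derive_mx => i j; rewrite (ord1 i).
case: j => [[|[|//]] lt2].
- rewrite (_ : (fun h => _) = fun h : R => - b * (h *: u + x) 0 1 / sqnorm2 (h *: u + x)).
    apply: is_derive_eq (is_derive_coord_div_sqnorm2_line _ _ _ _ x0) _.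
    rewrite mulmx_rV2E !mxE /=.
    by move: x0; rewrite /sqnorm2 => x0; field.
  by apply/funext => h; rewrite !mxE.
- rewrite (_ : (fun h => _) = fun h : R => b * (h *: u + x) 0 0 / sqnorm2 (h *: u + x)).
    apply: is_derive_eq (is_derive_coord_div_sqnorm2_line _ _ _ _ x0) _.
    rewrite mulmx_rV2E !mxE /=.
    by move: x0; rewrite /sqnorm2 => x0; field.
  by apply/funext => h; rewrite !mxE.
Qed.
End MagneticPotential.

Lemma jac_mulmx {R : realType} {f : 'rV[R]_2 -> 'rV[R]_2} {eta : 'rV[R]_2} {M : 'M[R]_2} :
  (forall v, is_derive eta v f (v *m M)) -> jac f eta = M^T.
Proof.
move=> fM; apply/matrixP => i j; rewrite !mxE.
by case: (fM (delta_mx 0 j)) => _ ->; rewrite -rowE mxE.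
Qed.

Section Trajectory.
Context {R : realType}.
Variables (b w : R) (y : 'rV[R]_2) (t : R).
Hypothesis w_neq0 : w != 0.

Lemma xt_affine (e : 'rV[R]_2) :
  xt b w y e t
  = (sin (w * t) / w) *: e + (cos (w * t) *: y - (sin (w * t) / w) *: Apot b y).
Proof. by apply/matrixP => i j; rewrite !mxE; ring. Qed.

Lemma derive_xt_time (e : 'rV[R]_2) :
  'D_1 (xt b w y e) t = - (w * sin (w * t)) *: y + cos (w * t) *: (e - Apot b y).
Proof.
have := is_deriveD (is_derive1Zl y (is_derive_comp_scale (is_derive_cos (w * t))))
  (is_derive1Zl (w^-1 *: (e - Apot b y)) (is_derive_comp_scale (is_derive_sin (w * t)))).
rewrite (_ : _ + _ = xt b w y e); last first.
  by apply/funext => s; rewrite /xt -scalerA.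
by move=> [_ ->]; rewrite scalerA mulrAC divff // mul1r mulrN.
Qed.

Lemma is_derive_xt (eta v : 'rV[R]_2) :
  is_derive eta v (fun e => xt b w y e t) ((sin (w * t) / w) *: v).
Proof.
rewrite (_ : (fun e => _) = fun e => (sin (w * t) / w) *: e
                               + (cos (w * t) *: y - (sin (w * t) / w) *: Apot b y)).
  exact: is_derive_affine.
by apply/funext => e; rewrite xt_affine.
Qed.

Lemma is_derive_xit (eta v : 'rV[R]_2) : sqnorm2 (xt b w y eta t) != 0 ->
  is_derive eta v (fun e => xit b w y e t)
    (v *m ((cos (w * t))%:M + (sin (w * t) / w) *: dApot b (xt b w y eta t))).
Proof.
move=> x0.
have dA : is_derive eta v (fun e => Apot b (xt b w y e t))
                          (((sin (w * t) / w) *: v) *m dApot b (xt b w y eta t)).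
  apply: (is_derive_along (Apot b) _ (xt b w y eta t) ((sin (w * t) / w) *: v)).
    by move=> h; rewrite !xt_affine scalerDr addrA !scalerA [h * _]mulrC.
  exact: is_derive_Apot.
pose p := - (w * sin (w * t)) *: y - cos (w * t) *: Apot b y.
have := is_deriveD (is_derive_affine p (cos (w * t)) eta v) dA.
rewrite (_ : _ + _ = fun e => xit b w y e t); last first.
  by apply/funext => e; rewrite /xit derive_xt_time /p scalerBr addrCA.
move=> H; refine (is_derive_eq H _).
by rewrite mulmxDr mul_mx_scalar -scalemxAl scalemxAr.
Qed.

Lemma jac_xt (eta : 'rV[R]_2) :
  jac (fun e => xt b w y e t) eta = (sin (w * t) / w)%:M.
Proof.
rewrite -[RHS]tr_scalar_mx; apply: jac_mulmx => v.
by rewrite mul_mx_scalar; exact: is_derive_xt.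
Qed.

Lemma jac_xit (eta : 'rV[R]_2) : sqnorm2 (xt b w y eta t) != 0 ->
  jac (fun e => xit b w y e t) eta
  = (cos (w * t))%:M + (sin (w * t) / w) *: dApot b (xt b w y eta t).
Proof.
move=> x0; rewrite (jac_mulmx (fun v => is_derive_xit eta v x0)).
by rewrite linearD linearZ /= tr_scalar_mx trmx_symtr.
Qed.

Lemma wedge_xt (eta : 'rV[R]_2) : y != 0 ->
  wedge y (xt b w y eta t) = sin (w * t) / w * (wedge y eta - b).
Proof.
rewrite -sqnorm2_eq0 => y0; rewrite /wedge /xt /Apot /vec2 !mxE /=.
by move: y0; rewrite /sqnorm2 => y0; field; rewrite w_neq0 y0.
Qed.

Lemma xt_neq0 (eta : 'rV[R]_2) : y != 0 -> wedge y eta != b -> xt b w y eta t != 0.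
Proof.
move=> y0 yeta; apply/eqP => x0.
have s0 : sin (w * t) = 0.
  apply/eqP; move: (wedge_xt eta y0); rewrite x0 /wedge !mxE !mulr0 subrr.
  by move/esym/eqP; rewrite !mulf_eq0 invr_eq0 subr_eq0 (negbTE w_neq0) (negbTE yeta) !orbF.
have c0 : cos (w * t) != 0.
  apply: contra_eq_neq (cos2Dsin2 (w * t)) => ->.
  by rewrite s0 expr0n add0r eq_sym oner_eq0.
move: x0; rewrite /xt s0 mul0r scale0r addr0 => /eqP.
by rewrite scaler_eq0 (negbTE c0) (negbTE y0).
Qed.
End Trajectory.

Section ComplexFactor.
Context {R : realType}.
Local Open Scope complex_scope.

Lemma complex_eq0 (x y : R) : (x%:C - 'i * y%:C == 0) = (x == 0) && (y == 0).
Proof. by simpc; rewrite eq_complex /= oppr_eq0. Qed.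

Lemma cos_add_sin_sub_i_neq0 (theta m n : R) : m != 0 ->
  (cos theta + n * sin theta)%:C - 'i * (m * sin theta)%:C != 0.
Proof.
move=> m0; rewrite complex_eq0 negb_and mulf_eq0 (negbTE m0) /=.
have [s0 | _] := eqVneq (sin theta) 0; last by rewrite orbT.
rewrite s0 mulr0 addr0 orbF; apply: contra_eq_neq (cos2Dsin2 theta) => ->.
by rewrite s0 expr0n add0r eq_sym oner_eq0.
Qed.

Lemma cos_sub_i_sin_sqr_sub_neq0 (theta m n : R) : m != 0 ->
  ((cos theta)%:C - 'i * (m * sin theta)%:C) ^+ 2 - (n * sin theta)%:C ^+ 2 != 0.
Proof.
move=> m0; rewrite subr_sqr mulf_neq0 //.
  rewrite [X in X != 0](_ : _ = (cos theta + - n * sin theta)%:C - 'i * (m * sin theta)%:C).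
    exact: cos_add_sin_sub_i_neq0.
  by ring.
rewrite [X in X != 0](_ : _ = (cos theta + n * sin theta)%:C - 'i * (m * sin theta)%:C).
  exact: cos_add_sin_sub_i_neq0.
by ring.
Qed.
End ComplexFactor.

Lemma Zmat_symtr {R : realType} {b w : R} (B : R) {y eta : 'rV[R]_2} {t : R} :
  w != 0 -> sqnorm2 (xt b w y eta t) != 0 ->
  exists p q : R[i], Zmat b w B y eta t
    = (((cos (w * t))%:C - 'i%C * (B / w * sin (w * t))%:C)%C)%:M + symtr p q
  /\ p ^+ 2 + q ^+ 2 = ((b / w / sqnorm2 (xt b w y eta t) * sin (w * t))%:C ^+ 2)%C.
Proof.
move=> w0 x0; rewrite /Zmat jac_xt jac_xit // /dApot.
move: x0; set x := xt b w y eta t => x0.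
set P := 2 * b * x 0 0 * x 0 1 / sqnorm2 x ^+ 2.
set Q := b * (x 0 1 ^+ 2 - x 0 0 ^+ 2) / sqnorm2 x ^+ 2.
exists (sin (w * t) / w * P)%:C%C, (sin (w * t) / w * Q)%:C%C; split.
  apply/matrixP => i j; rewrite !mxE.
  by case: (i == j); case: (i == 0); rewrite /=; ring.
have PQ : (sin (w * t) / w * P) ^+ 2 + (sin (w * t) / w * Q) ^+ 2
          = (b / w / sqnorm2 x * sin (w * t)) ^+ 2.
  by rewrite /P /Q; move: x0; rewrite /sqnorm2 => x0; field; rewrite x0 w0.
transitivity (((sin (w * t) / w * P) ^+ 2 + (sin (w * t) / w * Q) ^+ 2)%:C)%C.
  by ring.
by rewrite PQ; ring.
Qed.

Theorem proposition3p3 (R : realType) (b w B : R) (y eta : 'rV[R]_2) (t : R) :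
  0 < w -> 0 < B -> y != 0 -> wedge y eta != b -> 0 <= t ->
  let c := (cos (w * t))%:C%C in
  let s := sin (w * t) in
  let r2 := sqnorm2 (xt b w y eta t) in
  let Z := Zmat b w B y eta t in
  [/\ \det Z != 0,
      \det Z = (c - 'i%C * ((B / w * s)%:C)%C) ^+ 2 - ((b ^+ 2 / w ^+ 2 / r2 ^+ 2 * s ^+ 2)%:C)%C
    & forall mu : R[i], eigenvalue Z mu <->
        mu = c - 'i%C * ((B / w * s)%:C)%C + ((b / w / r2 * s)%:C)%C
        \/ mu = c - 'i%C * ((B / w * s)%:C)%C - ((b / w / r2 * s)%:C)%C].
Proof.
move=> w_gt0 B_gt0 y_neq0 yeta _ c s r2 Z; rewrite {}/c {}/s {}/r2 {}/Z.
have w_neq0 : w != 0 by rewrite gt_eqF.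
have x_neq0 : sqnorm2 (xt b w y eta t) != 0 by rewrite sqnorm2_eq0; exact: xt_neq0.
have [p [q [-> pq]]] := Zmat_symtr B w_neq0 x_neq0.
split.
- rewrite det_scalar_add_symtr pq; apply: cos_sub_i_sin_sqr_sub_neq0.
  by rewrite mulf_neq0 ?invr_eq0 ?gt_eqF.
- rewrite det_scalar_add_symtr pq; congr (_ - _).
  transitivity (((b / w / sqnorm2 (xt b w y eta t) * sin (w * t)) ^+ 2)%:C)%C.
    by ring.
  by congr (_%:C)%C; field; rewrite x_neq0 w_neq0.
- move=> mu; rewrite (eigenvalue_scalar_add_symtr _ pq).
  by split => [/orP[]/eqP|[]->]; [left | right | rewrite eqxx | rewrite eqxx orbT].
Qed.
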